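(* In the setting of the context, suppose there exists $Q^-\in\mathcal L_1^-$ such that $\delta(Q^-,Q^+)=\bot$ for every $Q^+\in\mathcal L_1^+$. Then the only pair $(h_1,h_2)\in\mathbb C(s)^2$ with $\widetilde\gamma_1h_1+\widetilde\gamma_2h_2=0$, $h_1^{\iota_1}=-h_1$ and $h_2^{\iota_2}=-h_2$ is $(0,0)$.
   Context: For a genus-zero weighted quadrant walk model (step set one of the five genus-zero sets, step weights $d_{i,j}>0$, Boltzmann weights $a,b>0$), $A=1-1/a$, $B=1-1/b$. $s\mapsto(x(s),y(s))$ is a fixed rational parametrization by $\mathbb P^1$ of the kernel curve (for a fixed real $t$ transcendental over $\mathbb Q((d_{i,j}),a,b)$), with $x(1/s)=x(s)$, $y(q/s)=y(s)$ for a fixed real $q$ not a root of unity; $\iota_1(s)=1/s$, $\iota_2(s)=q/s$, $\sigma(s)=qs$, $h^\tau=h\circ\tau$. $\widetilde\gamma_1=A/x(s)-td_{1,-1}/y(s)$ and $\widetilde\gamma_2=B/y(s)-td_{-1,1}/x(s)$ have divisors $(\widetilde\gamma_1)=P_1+P_2-0-\infty$, $(\widetilde\gamma_2)=P_3+P_4-0-\infty$, $P_i\notin\{0,\infty\}$. $\mathcal L_1^-=\{P_1,P_2,\iota_2P_3,\iota_2P_4\}$, $\mathcal L_1^+=\{\iota_1P_1,\iota_1P_2,\sigma^{-1}P_3,\sigma^{-1}P_4\}$. For $P,P'\in\mathbb P^1\setminus\{0,\infty\}$, the $\sigma$-distance $\delta(P,P')$ is the unique integer $n$ with $\sigma^nP=P'$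 if it exists, and $\bot$ otherwise. *)

From HB Require Import structures.
From mathcomp Require Import all_boot all_order all_algebra.
From mathcomp Require Import reals.
From mathcomp Require Import complex.
Set Implicit Arguments.
Unset Strict Implicit.
Unset Printing Implicit Defensive.
Import Order.TTheory GRing.Theory Num.Theory.
Local Open Scope ring_scope.

Notation Cx R := (R[i])%type.
Notation ratfun R := {fraction {poly (Cx R)}}.

Section RatFun.
Variable R : realType.
Local Notation C := (Cx R).
Local Notation F := (ratfun R).
Local Notation "x %:F" := (@FracField.tofrac _ x).

Definition RtoC (r : R) : C := (r%:C)%C.
Definition cst (c : C) : F := (c%:P)%:F.
Definition rcst (r : R) : F := cst (RtoC r).

Definition svar : F := ('X : {poly C})%:F.

Definition fnum (h : F) : {poly C} := \n_(repr h).
Definition fden (h : F) : {poly C} := \d_(repr h).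

Definition peval (p : {poly C}) (u : F) : F := (map_poly cst p).[u].

(* h o u : substitution s := u in h  (h^tau = h o tau) *)
Definition fcomp (h u : F) : F := peval (fnum h) u / peval (fden h) u.

Definition iota1 (h : F) : F := fcomp h svar^-1.
Definition iota2 (q : R) (h : F) : F := fcomp h (rcst q / svar).
Definition sigmaf (q : R) (h : F) : F := fcomp h (rcst q * svar).

Definition ordc (c : C) (h : F) : int :=
  (mup c (fnum h))%:Z - (mup c (fden h))%:Z.
Definition ordinf (h : F) : int :=
  (size (fden h))%:Z - (size (fnum h))%:Z.

(* evaluation of a bivariate polynomial P(X,Y) (outer variable Y) at (u,v) *)
Definition peval2 (P : {poly {poly C}}) (u v : F) : F :=
  (map_poly (fun p : {poly C} => peval p u) P).[v].
End RatFun.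
Arguments svar {R}.

Inductive in_gen_ring (R : realType) (gens : seq R) : R -> Prop :=
  | gen_rat (x : rat) : in_gen_ring gens (ratr x)
  | gen_elt (r : R) : r \in gens -> in_gen_ring gens r
  | gen_add (r1 r2 : R) : in_gen_ring gens r1 -> in_gen_ring gens r2 ->
        in_gen_ring gens (r1 + r2)
  | gen_mul (r1 r2 : R) : in_gen_ring gens r1 -> in_gen_ring gens r2 ->
        in_gen_ring gens (r1 * r2).

(* t is transcendental over Q(gens): no nonzero polynomial with coefficients *)
(* in Q[gens] (equivalently, after clearing denominators, in Q(gens)) has t  *)
(* as a root.                                                                *)
Definition transcendental_over (R : realType) (gens : seq R) (t : R) : Prop :=
  forall p : {poly R}, (forall k, in_gen_ring gens p`_k) -> p != 0 -> ~~ root p t.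

(* Step weights d i j for steps (i,j) in {-1,0,1}^2 (values outside are      *)
Definition genus0_weights (R : realType) (d : int -> int -> R) : Prop :=
  [/\ forall i j : int, 0 <= d i j,
      [/\ d (-1) (-1) = 0, d (-1) 0 = 0, d 0 (-1) = 0 & d 0 0 = 0],
      0 < d (-1) 1, 0 < d 1 (-1)
    & 0 < d 0 1 + d 1 1 + d 1 0].

Definition walk_params (R : realType) (d : int -> int -> R) (a b : R) : seq R :=
  [:: d (-1) (-1); d (-1) 0; d (-1) 1; d 0 (-1); d 0 0; d 0 1;
      d 1 (-1); d 1 0; d 1 1; a; b].

(* kernel K(x,y) = x y - t \sum_{i,j} d_{i,j} x^{i+1} y^{j+1} evaluated in C(s) *)
Definition kernelF (R : realType) (d : int -> int -> R) (t : R)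
    (x y : ratfun R) : ratfun R :=
  x * y - rcst t * \sum_(i < 3) \sum_(j < 3)
      rcst (d (i%:Z - 1) (j%:Z - 1)) * x ^+ i * y ^+ j.

(* (x(s),y(s)) is a rational parametrization by P^1 of the kernel curve:      *)
(* it lies on the curve and is birational (s belongs to C(x(s),y(s))).       *)
Definition kernel_param (R : realType) (d : int -> int -> R) (t : R)
    (x y : ratfun R) : Prop :=
  kernelF d t x y = 0 /\
  exists P Q : {poly {poly Cx R}},
    peval2 Q x y != 0 /\ svar * peval2 Q x y = peval2 P x y.

(* sigma-distance on P^1 \ {0,oo} (points given by their coordinate s):     *)
(* delta(P,P') = n iff sigma^n P = P', i.e. q^n P = P';  "bot" means no n.   *)
Definition sigma_dist_bot (R : realType) (q : R) (P P' : Cx R) : Prop :=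
  forall n : int, RtoC q ^ n * P != P'.

From HB Require Import structures.
From mathcomp Require Import all_boot all_order all_algebra.
From mathcomp Require Import reals complex.
From mathcomp Require Import generic_quotient zify ring.
Import Order.TTheory GRing.Theory Num.Theory.
Set Implicit Arguments.
Unset Strict Implicit.
Unset Printing Implicit Defensive.
Local Open Scope ring_scope.
Local Open Scope quotient_scope.

(** Write [ord_c] for the order at [c] in [C^*] and [c_n = q^n Q^-] for the
    sigma-orbit of [Q^-].  Since [g1 h1 = - g2 h2], the anti-invariance
    [ord_(1/c) h1 = ord_c h1], [ord_(q/c) h2 = ord_c h2] turns the equalities
    [ord g1 + ord h1 = ord g2 + ord h2] at [c] and at [q/c] into
      [ord_c h1 - ord_(c/q) h1 = ord_c g2 - ord_c g1 + ord_(q/c) g1 - ord_(q/c) g2].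
    As [Q^-] is at sigma-distance bot from [L1^+], no [c_n] is a zero of [g2] and
    no [q/c_n] is a zero of [g1]; so [n |-> ord_(c_n) h1] decreases at [n] by the
    number of points of [L1^-] equal to [c_n]: it is nonincreasing and drops at
    [n = 0].  But [q] is not a root of unity, so the orbit is infinite and this
    function vanishes for some [n >= 0] and some [n < 0]: a contradiction unless
    [h1 = 0], and then [h2 = 0]. *)

Lemma nonincreasing_int_step (f : int -> int) :
  (forall n, f (n + 1) <= f n) -> forall m n, m <= n -> f n <= f m.
Proof.
move=> step m n le_mn.
have [k ->] : exists k : nat, n = m + k%:Z.
  by exists `|n - m|%N; rewrite abszE ger0_norm ?subr_ge0 // addrCA subrr addr0.
elim: k => [|k IH]; first by rewrite addr0.
by rewrite -addn1 PoszD addrA (le_trans (step _)).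
Qed.

Lemma expz_mul_inj (K : fieldType) (u v : K) : u != 0 -> v != 0 ->
  (forall n : nat, (0 < n)%N -> u ^+ n != 1) -> injective (fun n : int => u ^ n * v).
Proof.
move=> u0 v0 u_not_root1 m n /(mulIf v0) umn.
have /eqP : u ^ (m - n) = 1 by rewrite expfzDr // -invr_expz umn divff // expfz_neq0.
apply: contraTeq; rewrite -subr_eq0; case: (m - n) => [[|k]|k] //= _.
  exact: u_not_root1.
by rewrite NegzE -exprnN invr_eq1; exact: u_not_root1.
Qed.

Lemma injective_nonroot (K : idomainType) (u : nat -> K) (p : {poly K}) :
  injective u -> p != 0 -> exists n, ~~ root p (u n).
Proof.
move=> u_inj p0; set rs := [seq u i | i <- iota 0 (size p)].
have [all_roots|/allPn[z /mapP[n _ ->] nr]] := boolP (all (root p) rs); last by exists n.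
have rs_uniq : uniq rs by rewrite map_inj_uniq // iota_uniq.
by have := max_poly_roots p0 all_roots rs_uniq; rewrite size_map size_iota ltnn.
Qed.

Section RationalFunctionOrder.
Variable R : realType.
Local Notation C := (Cx R).
Local Notation F := (ratfun R).
Local Notation "x %:F" := (@FracField.tofrac _ x).

Lemma fnum_fdenE (h : F) : h = (fnum h)%:F / (fden h)%:F.
Proof.
rewrite /fnum /fden -{1}[h]reprK; move: (repr h) => x.
have pi_mul_den : (\pi_F x) * (\d_x)%:F = (\n_x)%:F.
  rewrite !piE /= /FracField.mulf /= !numden_Ratio ?oner_neq0 //.
  apply/eqmodP; rewrite /= FracField.equivfE !numden_Ratio ?mulf_neq0 ?oner_neq0 ?denom_ratioP //.
  by rewrite !mulr1 mulrC.
by rewrite -pi_mul_den mulfK // tofrac_eq0 denom_ratioP.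
Qed.

Lemma fden_neq0 (h : F) : fden h != 0.
Proof. exact: denom_ratioP. Qed.

Lemma fnum_neq0 (h : F) : h != 0 -> fnum h != 0.
Proof. by apply: contraNneq => num0; rewrite [h]fnum_fdenE num0 rmorph0 mul0r. Qed.

Lemma ordc_frac (c : C) (N D : {poly C}) : N != 0 -> D != 0 ->
  ordc c (N%:F / D%:F) = (mup c N)%:Z - (mup c D)%:Z.
Proof.
move=> N0 D0; set h := N%:F / D%:F.
have h0 : h != 0 by rewrite mulf_neq0 ?invr_eq0 ?tofrac_eq0.
have cross : fnum h * D = N * fden h.
  apply/eqP; rewrite -tofrac_eq !tofracM -eqr_div ?tofrac_eq0 ?fden_neq0 //.
  by rewrite -fnum_fdenE.
move/(congr1 (mup c)): cross; rewrite !mupM ?fnum_neq0 ?fden_neq0 // /ordc.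
lia.
Qed.

Lemma ordcM (c : C) (f g : F) : f != 0 -> g != 0 ->
  ordc c (f * g) = ordc c f + ordc c g.
Proof.
move=> f0 g0.
have -> : f * g = (fnum f * fnum g)%:F / (fden f * fden g)%:F.
  by rewrite {1}[f]fnum_fdenE {1}[g]fnum_fdenE !tofracM invfM mulrACA.
rewrite ordc_frac ?mulf_neq0 ?fnum_neq0 ?fden_neq0 //.
rewrite !mupM ?fnum_neq0 ?fden_neq0 // /ordc; lia.
Qed.

Lemma ordcN (c : C) (f : F) : f != 0 -> ordc c (- f) = ordc c f.
Proof.
move=> f0.
have -> : - f = ((-1)%:P * fnum f)%:F / (fden f)%:F.
  by rewrite {1}[f]fnum_fdenE tofracM polyCN tofracN tofrac1 mulN1r mulNr.
rewrite ordc_frac ?mulf_neq0 ?polyC_eq0 ?oppr_eq0 ?oner_eq0 ?fnum_neq0 ?fden_neq0 //.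
by rewrite mupMr // rootC oppr_eq0 oner_eq0.
Qed.

Lemma ordc_nonroot (c : C) (f : F) : ~~ root (fnum f * fden f) c -> ordc c f = 0.
Proof. by rewrite rootM negb_or => /andP[nn nd]; rewrite /ordc !mupNroot. Qed.

Lemma svar_neq0 : svar != 0 :> F.
Proof. by rewrite /svar tofrac_eq0 polyX_eq0. Qed.

HB.instance Definition _ := GRing.RMorphism.copy (@cst R)
  ((@FracField.tofrac {poly C}) \o (@polyC C)).

Lemma pevalM (p p' : {poly C}) (u : F) : peval (p * p') u = peval p u * peval p' u.
Proof. by rewrite /peval rmorphM hornerM. Qed.

Lemma peval_XsubC (a : C) (u : F) : peval ('X - a%:P) u = u - cst a.
Proof. by rewrite /peval map_polyXsubC hornerXsubC. Qed.

(* [s ^+ D * p(k / s)], a polynomial as soon as [size p <= D] *)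
Definition recip_poly (k : C) (D : nat) (p : {poly C}) : {poly C} :=
  \sum_(i < D) (p`_i * k ^+ i) *: 'X^(D - i).

Lemma tofrac_recip_poly (k : C) (D : nat) (p : {poly C}) : (size p <= D)%N ->
  peval p (cst k / svar) * svar ^+ D = (recip_poly k D p)%:F.
Proof.
move=> sp; rewrite /peval (@horner_coef_wide _ D); last first.
  by rewrite size_map_inj_poly //; apply: fmorph_inj.
rewrite mulr_suml rmorph_sum; apply: eq_bigr => i _.
rewrite coef_map_id0 ?rmorph0 // -mul_polyC !rmorphM !rmorphXn /= -/(cst _) -/svar.
have eD : svar ^+ D = svar ^+ i * svar ^+ (D - i) :> F by rewrite -exprD subnKC // ltnW.
by rewrite eD exprMn exprVn !mulrA mulfVK ?expf_neq0 ?svar_neq0.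
Qed.

Lemma horner_recip_poly (k c : C) (D : nat) (p : {poly C}) : (size p <= D)%N -> c != 0 ->
  (recip_poly k D p).[c] = c ^+ D * p.[k / c].
Proof.
move=> sp c0; rewrite /recip_poly horner_sum (horner_coef_wide _ sp) mulr_sumr.
apply: eq_bigr => i _; rewrite hornerZ hornerXn.
have eD : c ^+ D = c ^+ i * c ^+ (D - i) by rewrite -exprD subnKC // ltnW.
by rewrite eD exprMn exprVn [RHS]mulrC mulrA [p`_i * (_ / _)]mulrA mulfVK ?expf_neq0.
Qed.

Lemma recip_poly_mulXsubC (k a : C) (D : nat) (p : {poly C}) : (size p <= D)%N ->
  recip_poly k D.+1 (p * ('X - a%:P)) = (k%:P - a *: 'X) * recip_poly k D p.
Proof.
move=> sp; apply/eqP; rewrite -tofrac_eq; apply/eqP.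
have sp' : (size (p * ('X - a%:P))%R <= D.+1)%N.
  by rewrite (leq_trans (size_polyMleq _ _)) // size_XsubC addn2.
rewrite tofracM -(tofrac_recip_poly _ sp') -(tofrac_recip_poly _ sp) pevalM peval_XsubC.
rewrite -mul_polyC tofracB tofracM -/(cst _) -/(cst _) -/svar exprS.
set u := peval p _; set s := svar; set ck := cst k; set ca := cst a.
have s0 : s != 0 := svar_neq0.
have -> : ck / s - ca = (ck - ca * s) / s by rewrite mulrBl mulfK.
by rewrite !mulrA divfK // [u * _]mulrC.
Qed.

Lemma mup_XsubC (a : C) : mup a ('X - a%:P) = 1%N.
Proof. by have := mup_XsubCX 1 a a; rewrite expr1 eqxx. Qed.

Lemma mup_recip_poly (k c : C) (D : nat) (p : {poly C}) :
  k != 0 -> c != 0 -> p != 0 -> (size p <= D)%N ->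
  recip_poly k D p != 0 /\ mup c (recip_poly k D p) = mup (k / c) p.
Proof.
move=> k0 c0; set a := k / c; have a0 : a != 0 by rewrite mulf_neq0 ?invr_eq0.
move mp : (mup a p) => m; elim: m p D mp => [|m IH] p D mp p0 sp.
  have nr : ~~ root (recip_poly k D p) c.
    rewrite rootE horner_recip_poly // mulf_neq0 ?expf_neq0 // -rootE.
    by rewrite root_factor_theorem XsubC_dvd // mp.
  by split; [apply: contraNneq nr => ->; rewrite root0 | rewrite mupNroot].
have /factor_theorem[p' ep] : root p a by rewrite root_factor_theorem XsubC_dvd // mp.
have p'0 : p' != 0 by apply: contraNneq p0 => p'0; rewrite ep p'0 mul0r.
have mp' : mup a p' = m by move: mp; rewrite ep mupM ?polyXsubC_eq0 // mup_XsubC addn1 => -[].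
have size_p : size p = (size p').+1.
  by rewrite ep size_Mmonic ?monicXsubC // size_XsubC addn2.
case: D sp => [|D]; rewrite size_p // ltnS => sp'.
have [r0 mr] := IH p' D mp' p'0 sp'.
have linear_factor : k%:P - a *: 'X = (- a)%:P * ('X - c%:P) :> {poly C}.
  have -> : k = a * c by rewrite /a divfK.
  by rewrite -mul_polyC polyCM polyCN; ring.
rewrite ep recip_poly_mulXsubC // linear_factor -mulrA.
split; first by rewrite !mulf_neq0 ?polyC_eq0 ?oppr_eq0 ?polyXsubC_eq0.
by rewrite mupMr ?rootC ?oppr_eq0 // mupM ?polyXsubC_eq0 // mup_XsubC mr.
Qed.

Lemma ordc_subst_div (k c : C) (h : F) : k != 0 -> c != 0 -> h != 0 ->
  ordc c (fcomp h (cst k / svar)) = ordc (k / c) h.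
Proof.
move=> k0 c0 h0; set n := fnum h; set d := fden h.
have [rn0 mup_rn] := mup_recip_poly k0 c0 (fnum_neq0 h0) (leqnn (size n)).
have [rd0 mup_rd] := mup_recip_poly k0 c0 (fden_neq0 h) (leqnn (size d)).
have -> : fcomp h (cst k / svar) =
    (recip_poly k (size n) n * 'X^(size d))%:F / (recip_poly k (size d) d * 'X^(size n))%:F.
  rewrite /fcomp -/n -/d !tofracM -!tofrac_recip_poly // !tofracXn -/svar.
  set x := svar ^+ size n; set y := svar ^+ size d.
  have xy0 : x * y != 0 by rewrite mulf_neq0 ?expf_neq0 ?svar_neq0.
  by rewrite -[_ * x * y]mulrA -[_ * y * x]mulrA [y * x]mulrC invfM mulrACA divff // mulr1.
have Xn_nonroot j : ~~ root ('X^j : {poly C}) c by rewrite rootE hornerXn expf_neq0.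
have Xn_neq0 j : ('X^j : {poly C}) != 0 by rewrite monic_neq0 ?monicXn.
by rewrite ordc_frac ?mulf_neq0 // !mupMl // mup_rn mup_rd.
Qed.

Lemma ordc_iota1 (c : C) (h : F) : c != 0 -> h != 0 -> ordc c (iota1 h) = ordc c^-1 h.
Proof.
move=> c0 h0; rewrite /iota1; have -> : svar^-1 = cst 1 / svar :> F by rewrite rmorph1 mul1r.
by rewrite (ordc_subst_div (oner_neq0 _) c0 h0) div1r.
Qed.

Lemma RtoC_eq0 (r : R) : (RtoC r == 0) = (r == 0).
Proof. exact: (fmorph_eq0 (real_complex R)). Qed.

Lemma RtoCXn_eq1 (r : R) (n : nat) : (RtoC r ^+ n == 1) = (r ^+ n == 1).
Proof. by rewrite -(rmorphXn (real_complex R)) (fmorph_eq1 (real_complex R)). Qed.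

Lemma ordc_iota2 (q : R) (c : C) (h : F) : q != 0 -> c != 0 -> h != 0 ->
  ordc c (iota2 q h) = ordc (RtoC q / c) h.
Proof. by move=> q0 c0 h0; rewrite (ordc_subst_div _ c0 h0) // RtoC_eq0. Qed.
End RationalFunctionOrder.

Section AntiInvariantSolutions.
Variables (R : realType) (q : R) (P1 P2 P3 P4 Qm : Cx R) (g1 g2 h1 h2 : ratfun R).
Local Notation qC := (RtoC q).
Local Notation orbit n := (qC ^ n * Qm).
Hypotheses (q_neq0 : q != 0) (q_not_unity_root : forall n : nat, (0 < n)%N -> q ^+ n != 1).
Hypotheses (P1_neq0 : P1 != 0) (P2_neq0 : P2 != 0) (P3_neq0 : P3 != 0) (P4_neq0 : P4 != 0).
Hypotheses (g1_neq0 : g1 != 0) (g2_neq0 : g2 != 0) (h1_neq0 : h1 != 0) (h2_neq0 : h2 != 0).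
Hypothesis divisor_g1 : forall c, ordc c g1 = (c == P1)%:Z + (c == P2)%:Z - (c == 0)%:Z.
Hypothesis divisor_g2 : forall c, ordc c g2 = (c == P3)%:Z + (c == P4)%:Z - (c == 0)%:Z.
Hypothesis linear_relation : g1 * h1 + g2 * h2 = 0.
Hypotheses (h1_anti : iota1 h1 = - h1) (h2_anti : iota2 q h2 = - h2).
Hypothesis Qm_in_L1m : Qm \in [:: P1; P2; qC / P3; qC / P4].
Hypothesis Qm_sigma_far :
  forall Qp, Qp \in [:: P1^-1; P2^-1; P3 / qC; P4 / qC] -> sigma_dist_bot q Qm Qp.

Let qC_neq0 : qC != 0. Proof. by rewrite RtoC_eq0. Qed.

Lemma ordc_h1_sigma_diff (c : Cx R) : c != 0 ->
  ordc c h1 - ordc (c / qC) h1 =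
  ordc c g2 - ordc c g1 + ordc (qC / c) g1 - ordc (qC / c) g2.
Proof.
move=> c0; have qc0 : qC / c != 0 by rewrite mulf_neq0 ?invr_eq0.
have ordc_balance z : ordc z g1 + ordc z h1 = ordc z g2 + ordc z h2.
  have gh0 : g2 * h2 != 0 := mulf_neq0 g2_neq0 h2_neq0.
  have gh : g1 * h1 = - (g2 * h2) by apply/eqP; rewrite -addr_eq0 linear_relation.
  by rewrite -(ordcM z g1_neq0 h1_neq0) -(ordcM z g2_neq0 h2_neq0) gh (ordcN z gh0).
have h1_sym : ordc (c / qC) h1 = ordc (qC / c) h1.
  by rewrite -[c / qC]invf_div -(ordc_iota1 qc0 h1_neq0) h1_anti (ordcN _ h1_neq0).
have h2_sym : ordc (qC / c) h2 = ordc c h2.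
  by rewrite -(ordc_iota2 q_neq0 c0 h2_neq0) h2_anti (ordcN _ h2_neq0).
have := ordc_balance c; have := ordc_balance (qC / c).
(* [lia] gets lost in the equations between rational functions of the context *)
clear -h1_sym h2_sym; lia.
Qed.

Lemma Qm_neq0 : Qm != 0.
Proof. by move: Qm_in_L1m; rewrite !inE => /or4P[] /eqP->; rewrite ?mulf_neq0 ?invr_eq0. Qed.

Lemma orbit_neq0 n : orbit n != 0.
Proof. by rewrite mulf_neq0 ?expfz_neq0 ?Qm_neq0. Qed.

Lemma orbit_avoids n Qp : Qp \in [:: P1^-1; P2^-1; P3 / qC; P4 / qC] ->
  (orbit n == Qp * qC) = false.
Proof.
move=> /Qm_sigma_far /(_ (n - 1)) far; apply/negbTE.
by rewrite -[n](subrK 1) expfzDr // expr1z mulrAC (inj_eq (mulIf qC_neq0)).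
Qed.

Lemma ordc_g2_orbit n : ordc (orbit n) g2 = 0.
Proof.
rewrite divisor_g2 (negbTE (orbit_neq0 n)) -[P3](divfK qC_neq0) -[P4](divfK qC_neq0).
by rewrite !orbit_avoids // !inE eqxx ?orbT.
Qed.

Lemma reflected_orbit_eq n P : P != 0 -> (qC / orbit n == P) = (orbit n == P^-1 * qC).
Proof.
move=> P0; have o0 := orbit_neq0 n.
by rewrite -(inj_eq (mulIf o0)) divfK // -(inj_eq (mulfI (invr_neq0 P0))) mulKf.
Qed.

Lemma ordc_g1_reflected_orbit n : ordc (qC / orbit n) g1 = 0.
Proof.
have qo0 : qC / orbit n != 0 by rewrite mulf_neq0 ?invr_eq0 ?orbit_neq0.
rewrite divisor_g1 (negbTE qo0) !reflected_orbit_eq //.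
by rewrite !orbit_avoids // !inE eqxx ?orbT.
Qed.

Lemma ordc_h1_orbit_step n :
  ordc (orbit n) h1 - ordc (orbit (n - 1)) h1 =
  - (count_mem (orbit n) [:: P1; P2; qC / P3; qC / P4])%:Z.
Proof.
rewrite expfzDr // exprN1 mulrAC ordc_h1_sigma_diff ?orbit_neq0 //.
rewrite ordc_g2_orbit ordc_g1_reflected_orbit divisor_g1 divisor_g2.
have qo0 : qC / orbit n != 0 by rewrite mulf_neq0 ?invr_eq0 ?orbit_neq0.
rewrite (negbTE (orbit_neq0 n)) (negbTE qo0) !reflected_orbit_eq //= !(eq_sym (orbit n)).
rewrite [qC / P3]mulrC [qC / P4]mulrC.
by rewrite !PoszD; ring.
Qed.

Lemma ordc_h1_orbit_nonincreasing m n : m <= n -> ordc (orbit n) h1 <= ordc (orbit m) h1.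
Proof.
move: m n; apply: (@nonincreasing_int_step (fun k => ordc (orbit k) h1)) => n.
by rewrite -subr_le0 -{2}[n](addrK 1) ordc_h1_orbit_step oppr_le0.
Qed.

Lemma ordc_h1_orbit_drop : ordc (orbit 0) h1 < ordc (orbit (-1)) h1.
Proof.
rewrite -subr_lt0 -[-1]sub0r ordc_h1_orbit_step oppr_lt0 ltz_nat expr0z mul1r.
by rewrite -has_count has_pred1.
Qed.

Lemma ordc_h1_orbit_vanishes (u : nat -> int) : injective u ->
  exists n, ordc (orbit (u n)) h1 = 0.
Proof.
move=> u_inj; have qC_not_unity_root n : (0 < n)%N -> qC ^+ n != 1.
  by rewrite RtoCXn_eq1; exact: q_not_unity_root.
have orbit_inj := expz_mul_inj qC_neq0 Qm_neq0 qC_not_unity_root.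
have nh1 : fnum h1 * fden h1 != 0 := mulf_neq0 (fnum_neq0 h1_neq0) (fden_neq0 h1).
have [n nr] := injective_nonroot (inj_comp orbit_inj u_inj) nh1.
by exists n; apply: ordc_nonroot.
Qed.

Lemma anti_invariant_absurd : False.
Proof.
have Posz_inj : injective Posz by move=> ? ? [].
have Negz_inj : injective Negz by move=> ? ? [].
have [m h1_m] := ordc_h1_orbit_vanishes Posz_inj.
have [n h1_n] := ordc_h1_orbit_vanishes Negz_inj.
have := le_lt_trans (ordc_h1_orbit_nonincreasing (m := 0) (n := m) isT) ordc_h1_orbit_drop.
move/lt_le_trans/(_ (ordc_h1_orbit_nonincreasing (m := Negz n) (n := -1) isT)).
by rewrite h1_m h1_n ltxx.
Qed.
End AntiInvariantSolutions.

Unset Implicit Arguments.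

Theorem lemma3p12
  (R : realType) (d : int -> int -> R) (a b t q : R)
  (x y : ratfun R) (P1 P2 P3 P4 : Cx R) :
  (* weighted genus-zero model *)
  genus0_weights d -> 0 < a -> 0 < b ->
  (* t real, transcendental over Q((d_{i,j}), a, b) *)
  transcendental_over (walk_params d a b) t ->
  (* q real, nonzero, not a root of unity *)
  q != 0 -> (forall n : nat, (0 < n)%N -> q ^+ n != 1) ->
  (* rational parametrization of the kernel curve with its symmetries *)
  kernel_param d t x y ->
  iota1 x = x -> iota2 q y = y ->
  let A := 1 - a^-1 in
  let B := 1 - b^-1 in
  let g1 := rcst A / x - rcst (t * d 1 (-1)) / y in
  let g2 := rcst B / y - rcst (t * d (-1) 1) / x in
  (* divisors (g1) = P1 + P2 - 0 - oo, (g2) = P3 + P4 - 0 - oo *)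
  g1 != 0 -> g2 != 0 ->
  P1 != 0 -> P2 != 0 -> P3 != 0 -> P4 != 0 ->
  (forall c : Cx R, ordc c g1 = (c == P1)%:Z + (c == P2)%:Z - (c == 0)%:Z) ->
  ordinf g1 = -1 ->
  (forall c : Cx R, ordc c g2 = (c == P3)%:Z + (c == P4)%:Z - (c == 0)%:Z) ->
  ordinf g2 = -1 ->
  (* some Q- in L1^- is at sigma-distance bot from every Q+ in L1^+ *)
  let qC := RtoC q in
  let L1m := [:: P1; P2; qC / P3; qC / P4] in
  let L1p := [:: P1^-1; P2^-1; P3 / qC; P4 / qC] in
  (exists2 Qm, Qm \in L1m & forall Qp, Qp \in L1p -> sigma_dist_bot q Qm Qp) ->
  forall h1 h2 : ratfun R,
    g1 * h1 + g2 * h2 = 0 -> iota1 h1 = - h1 -> iota2 q h2 = - h2 ->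
    h1 = 0 /\ h2 = 0.
Proof.
(* Only the divisors of [g1], [g2] on [C^*] matter: the orbit of [Q^-] avoids [0] and [oo]. *)
move=> _ _ _ _ q0 q_not_unity_root _ _ _ A B g1 g2 g1_0 g2_0 P1_0 P2_0 P3_0 P4_0 div_g1 _ div_g2 _
  qC L1m L1p [Qm Qm_in Qm_far] h1 h2 relation h1_anti h2_anti.
have [h1_0|h1_0] := eqVneq h1 0.
  split=> //; apply/eqP; move: relation; rewrite h1_0 mulr0 add0r => /eqP.
  by rewrite mulf_eq0 (negbTE g2_0).
have [h2_0|h2_0] := eqVneq h2 0.
  move/eqP: relation; rewrite h2_0 mulr0 addr0 mulf_eq0 (negbTE g1_0).
  by rewrite (negbTE h1_0).
by case: (anti_invariant_absurd q0 q_not_unity_root P1_0 P2_0 P3_0 P4_0 g1_0 g2_0 h1_0 h2_0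
  div_g1 div_g2 relation h1_anti h2_anti Qm_in Qm_far).
Qed.
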